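(* Let $t\in\mathbb{N}_0$ and $d\ge t$. Suppose real numbers $\alpha_\pi$, indexed by the partitions $\pi$ of $t$, satisfy $$\mu_{1,d}(M_1,\dots,M_t)=\sum_{\pi\in\mathscr{P}_t}\alpha_\pi\sum_{s\in S_t,\ s\sim\pi}\ \prod_{c\in s}\operatorname{trace}(M_c)\qquad\text{for all }M_1,\dots,M_t\in\mathscr{H}_d.$$ Then $\alpha_\pi>0$ for every $\pi\in\mathscr{P}_t$.
   Context: $\mathscr{H}_d$ denotes the real symmetric $d\times d$ matrices with $\langle A,B\rangle=\operatorname{trace}(AB)$. $\mathcal{G}_{1,d}$ is the set of rank-one orthogonal projections in $\mathscr{H}_d$, with orthogonally invariant Borel probability measure $\sigma_{1,d}$, and $\mu_{1,d}(M_1,\dots,M_t):=\int_{\mathcal{G}_{1,d}}\langle P,M_1\rangle\cdots\langle P,M_t\rangle\,d\sigma_{1,d}(P)$. $\mathscr{P}_t$ is the set of partitions of $t$ (nonincreasing nonnegative integer vectors $(\pi_1,\dots,\pi_t)$ summing to $t$). $S_t$ is the permutation group of $\{1,\dots,t\}$; each $s\in S_t$ is written as a product of disjoint cycles (fixed points being cycles of length one), $c\in s$ means $c$ is one of these cycles, and $s\sim\pi$ means the cycle lengths of $s$, in nonincreasing order, are the nonzero entries of $\pi$. For a cycle $c=(c_1\,c_2\,\ldots\,c_l)$, $M_c:=M_{c_1}M_{c_2}\cdots M_{c_l}$. *)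

From HB Require Import structures.
From mathcomp Require Import all_boot all_order all_algebra all_fingroup.
From mathcomp Require Import all_classical all_reals all_analysis.

Set Implicit Arguments.
Unset Strict Implicit.
Unset Printing Implicit Defensive.
Import Order.TTheory GRing.Theory Num.Theory.
Local Open Scope classical_set_scope.
Local Open Scope ring_scope.

Definition symmetric_mx (R : realType) (d : nat) (M : 'M[R]_d) : Prop :=
  M^T = M.

Definition hs_inner (R : realType) (d : nat) (A B : 'M[R]_d) : R := \tr (A *m B).

Definition Grass1 (R : realType) (d : nat) : set 'M[R]_d :=
  [set P | P^T = P /\ P *m P = P /\ \rank P = 1%N].

(* Borel sigma-algebra on 'M[R]_d ~ R^{d x d}: generated by the preimages of
   Borel sets of R under the entry maps. *)
(* carrier alias of 'M[R]_d, pointed at 0 (needed to build a measurable type) *)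
Definition mxT (R : realType) (d : nat) : Type := 'M[R]_d.
HB.instance Definition _ (R : realType) (d : nat) := Choice.on (mxT R d).
HB.instance Definition _ (R : realType) (d : nat) :=
  isPointed.Build (mxT R d) (0 : 'M[R]_d).

Definition mx_entry_gen (R : realType) (d : nat) : set (set (mxT R d)) :=
  [set X | exists (i j : 'I_d) (A : set R), measurable A /\
             X = (fun M : 'M[R]_d => M i j) @^-1` A].

Notation MxSpace R d := (g_sigma_algebraType (@mx_entry_gen R d)).

Definition orth_invariant (R : realType) (d : nat)
    (P : set (MxSpace R d) -> \bar R) : Prop :=
  forall U : 'M[R]_d, U^T *m U = 1%:M ->
  forall A : set (MxSpace R d), measurable A ->
    P ((fun X : 'M[R]_d => U *m X *m U^T) @^-1` A) = P A.

(* Partitions of t: nonincreasing vectors (pi_1,...,pi_t) of naturals summing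
   to t; entries are <= t, so we store them in 'I_t.+1 to get a finType. *)
Definition is_partn (t : nat) (x : t.-tuple 'I_t.+1) : bool :=
  sorted geq [seq val i | i <- x] && (sumn [seq val i | i <- x] == t).

Definition partition_of (t : nat) := {x : t.-tuple 'I_t.+1 | is_partn x}.

Definition partn_seq (t : nat) (p : partition_of t) : seq nat :=
  [seq val i | i <- val p].

Definition cycle_lengths (t : nat) (s : 'S_t) : seq nat :=
  sort geq [seq #|C| | C : {set 'I_t} in porbits s].

Definition cycle_type_is (t : nat) (s : 'S_t) (p : partition_of t) : bool :=
  [seq k <- partn_seq p | k != 0%N] == cycle_lengths s.

(* M_c = M_{c_1} M_{c_2} ... M_{c_l} for the cycle c = (c_1 c_2 ... c_l) of s
   with orbit C, where c_{k+1} = s^k c_1, c_1 some element of C. *)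
Definition cycle_mx (R : realType) (d t : nat) (M : 'I_t -> 'M[R]_d)
    (s : 'S_t) (C : {set 'I_t}) : 'M[R]_d :=
  match [pick x in C] with
  | Some x => \prod_(k < #|C|) M ((s ^+ k)%g x)
  | None => 1%:M
  end.

Definition mu1 (R : realType) (d t : nat) (P : set (MxSpace R d) -> \bar R)
    (M : 'I_t -> 'M[R]_d) : \bar R :=
  (\int[P]_(X in @Grass1 R d) (\prod_(i < t) hs_inner X (M i))%:E)%E.

From HB Require Import structures.
From mathcomp Require Import all_boot all_order all_algebra all_fingroup.
From mathcomp Require Import all_classical all_reals all_analysis.
From mathcomp Require Import zify.
Import Order.TTheory GRing.Theory Num.Theory.
Set Implicit Arguments. Unset Strict Implicit. Unset Printing Implicit Defensive.

(* Fix g in S_t and, embedding {1..t} into {1..d} (this is where t <= d is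
   used), test the identity on M_j = E_(j, g j) + E_(g j, j).  On a rank-one
   symmetric X = c r, <X, M_j> = 2 c_j r_(g j), so the left-hand side J does not
   depend on g.  On the right-hand side every matrix is entrywise nonnegative, a
   product of cycle traces vanishes unless s has the same cycles as g, and it is
   at least 1 for s = g; hence alpha_pi K = J with K > 0 when pi is the cycle
   type of g, and every partition of t is a cycle type.  Finally M_j = I gives
   1 = sum_pi alpha_pi c_pi with all c_pi >= 0, which forces J > 0, so every
   alpha_pi is positive. *)

(* [block_succ L] cycles each of the consecutive blocks of [0, sumn L) whose
   lengths are listed in [L]; [block_index L i] is the block containing [i]. *)
Fixpoint block_succ (L : seq nat) (i : nat) : nat :=
  match L with
  | [::] => i
  | l :: L' =>
    if i < l then (if i.+1 < l then i.+1 else 0) else l + block_succ L' (i - l)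
  end.

Fixpoint block_index (L : seq nat) (i : nat) : nat :=
  match L with
  | [::] => 0
  | l :: L' => if i < l then 0 else (block_index L' (i - l)).+1
  end.

Lemma block_succ_lt L i : i < sumn L -> block_succ L i < sumn L.
Proof.
elim: L i => [//|l L IH] i /=; case: (ltnP i l) => il.
  by case: (ltnP i.+1 l) => i1l _; lia.
by move=> h; have := IH (i - l); lia.
Qed.

Lemma block_succ_inj L i j : i < sumn L -> j < sumn L ->
  block_succ L i = block_succ L j -> i = j.
Proof.
elim: L i j => [//|l L IH] i j /= hi hj.
case: (ltnP i l) => il; case: (ltnP j l) => jl.
- by case: (ltnP i.+1 l) => i1; case: (ltnP j.+1 l) => j1; lia.
- by case: (ltnP i.+1 l) => i1 e; lia.
- by case: (ltnP j.+1 l) => j1 e; lia.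
- move/addnI/IH => eq_ij.
  suff : i - l = j - l by lia.
  by apply: eq_ij; lia.
Qed.

Lemma block_index_succ L i : i < sumn L ->
  block_index L (block_succ L i) = block_index L i.
Proof.
elim: L i => [//|l L IH] i /= hi; case: (ltnP i l) => il.
  by case: (ltnP i.+1 l) => i1; [rewrite i1 | rewrite (leq_ltn_trans _ il)].
have -> : (l + block_succ L (i - l) < l) = false by lia.
by rewrite addKn IH //; lia.
Qed.

Lemma block_index_lt L i : i < sumn L -> block_index L i < size L.
Proof.
elim: L i => [//|l L IH] i /= hi; case: (ltnP i l) => il //.
by rewrite ltnS IH //; lia.
Qed.

Lemma iter_block_succ_head l L i m : i + m < l -> iter m (block_succ (l :: L)) i = i + m.
Proof.
elim: m => [|m IH] h /=; first by rewrite addn0.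
rewrite IH; last lia.
have -> : i + m < l by lia.
have -> : (i + m).+1 < l by lia.
lia.
Qed.

Lemma iter_block_succ_behead l L x m :
  iter m (block_succ (l :: L)) (l + x) = l + iter m (block_succ L) x.
Proof.
elim: m => [//|m IH] /=; rewrite IH /=.
have -> : (l + iter m (block_succ L) x < l) = false by lia.
by rewrite addKn.
Qed.

Lemma block_index_connect L i j : i < sumn L -> j < sumn L ->
  block_index L i = block_index L j -> exists m, iter m (block_succ L) i = j.
Proof.
elim: L i j => [//|l L IH] i j /= hi hj.
case: (ltnP i l) => il; case: (ltnP j l) => jl //.
- move=> _; exists (j + (l - i).-1.+1); rewrite iterD /=.
  rewrite (@iter_block_succ_head l L i (l - i).-1); last lia.
  have -> : i + (l - i).-1 < l by lia.
  have -> : (i + (l - i).-1).+1 < l = false by lia.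
  by rewrite -[j]add0n iter_block_succ_head //; lia.
- case=> /IH [||m hm]; try lia.
  exists m; have -> : i = l + (i - l) by lia.
  by rewrite iter_block_succ_behead hm; lia.
Qed.

Lemma count_block_index L k :
  count (fun j => block_index L j == k) (iota 0 (sumn L)) = nth 0 L k.
Proof.
elim: L k => [|l L IH] k /=; first by rewrite nth_nil.
have out_head j : (l + j < l) = false by lia.
rewrite iotaD count_cat add0n (@eq_in_count _ _ (fun _ => k == 0)); last first.
  by move=> j; rewrite mem_iota /= => ->; rewrite eq_sym.
rewrite -[in iota l _](addn0 l) iotaDl count_map.
case: k => [|k] /=.
  rewrite count_predT size_iota (@eq_count _ _ pred0) ?count_pred0 ?addn0 //.
  by move=> j /=; rewrite out_head.
rewrite count_pred0 (@eq_count _ _ (fun j => block_index L j == k)) ?IH //.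
by move=> j /=; rewrite out_head addKn.
Qed.

Lemma card_ord_pred t (P : pred nat) : #|[set j : 'I_t | P j]| = count P (iota 0 t).
Proof.
rewrite -val_enum_ord count_map cardE /enum_mem size_filter /= filter_predT.
by apply: eq_count => j; rewrite /= inE.
Qed.

Section BlockPerm.
Variables (t : nat) (L : seq nat).
Hypotheses (sumL : sumn L = t) (L_gt0 : all (leq 1) L).

Definition block_perm_fun (i : 'I_t) : 'I_t := insubd i (block_succ L i).

Lemma val_block_perm_fun i : val (block_perm_fun i) = block_succ L i.
Proof. by rewrite val_insubd -{2}sumL block_succ_lt // sumL. Qed.

Lemma block_perm_fun_inj : injective block_perm_fun.
Proof.
move=> i j /(congr1 val); rewrite !val_block_perm_fun => /block_succ_inj eq_ij.
by apply: val_inj; apply: eq_ij; rewrite sumL.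
Qed.

Definition block_perm : 'S_t := perm block_perm_fun_inj.

Lemma val_block_permX m i : val ((block_perm ^+ m)%g i) = iter m (block_succ L) i.
Proof.
elim: m => [|m IH]; first by rewrite expg0 perm1.
by rewrite expgSr permM permE val_block_perm_fun IH.
Qed.

Lemma block_index_permX m (i : 'I_t) :
  block_index L ((block_perm ^+ m)%g i) = block_index L i.
Proof.
elim: m => [|m IH]; first by rewrite expg0 perm1.
rewrite val_block_permX /= -val_block_permX block_index_succ ?sumL //.
exact: ltn_ord.
Qed.

Definition block k : {set 'I_t} := [set j : 'I_t | block_index L j == k].

Lemma porbit_block_perm i : porbit block_perm i = block (block_index L i).
Proof.
apply/setP => j; rewrite inE; apply/porbitP/eqP => [[m ->]|].
  by rewrite block_index_permX.
move/esym/(@block_index_connect L i j); rewrite sumL.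
move=> /(_ (ltn_ord i) (ltn_ord j)) [m hm].
by exists m; apply: val_inj; rewrite val_block_permX.
Qed.

Lemma card_block k : #|block k| = nth 0 L k.
Proof.
rewrite /block (@card_ord_pred t (fun j => block_index L j == k)).
by rewrite -sumL count_block_index.
Qed.

Lemma block_nonempty k : k < size L -> exists j, j \in block k.
Proof.
move=> ltkL; have : 0 < #|block k| by rewrite card_block (allP L_gt0) ?mem_nth.
by rewrite card_gt0 => /set0Pn.
Qed.

Lemma block_inj : {in gtn (size L) &, injective block}.
Proof.
move=> k k' /block_nonempty [j jk] _ eq_kk'.
by move: (jk); rewrite {1}eq_kk' !inE => /eqP <-; move: jk; rewrite inE => /eqP.
Qed.

Lemma perm_porbit_sizes_block_perm :
  perm_eq [seq #|C| | C : {set 'I_t} in porbits block_perm] L.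
Proof.
have porbitsE : perm_eq (enum (porbits block_perm)) [seq block k | k <- iota 0 (size L)].
  apply: uniq_perm; first exact: enum_uniq.
    rewrite map_inj_in_uniq ?iota_uniq //.
    by move=> k k'; rewrite !mem_iota /= => h h'; apply: block_inj.
  move=> C; rewrite mem_enum; apply/imsetP/mapP => [[i _ ->]|[k]].
    exists (block_index L i); last exact: porbit_block_perm.
    by rewrite mem_iota block_index_lt // sumL.
  rewrite mem_iota /= => /block_nonempty [j]; rewrite inE => /eqP <- ->.
  by exists j; rewrite ?porbit_block_perm.
apply: perm_trans (perm_map (fun C : {set 'I_t} => #|C|) porbitsE) _.
by rewrite -map_comp (eq_map card_block) -/(mkseq _ _) mkseq_nth.
Qed.

End BlockPerm.

Lemma geq_trans : transitive geq.
Proof. by move=> a b c /= h1 h2; exact: leq_trans h2 h1. Qed.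

Lemma geq_total : total geq.
Proof. by move=> a b; exact: leq_total. Qed.

Lemma geq_anti : antisymmetric geq.
Proof. by move=> a b /andP[h1 h2]; apply/anti_leq/andP. Qed.

Lemma sorted_geq_filter0_nseq (s : seq nat) : sorted geq s ->
  s = [seq k <- s | k != 0] ++ nseq (count_mem 0 s) 0.
Proof.
elim: s => [//|x s IH] /= sorted_xs; have /IH {1}-> := path_sorted sorted_xs.
case: (posnP x) => [x0|x_gt0]; last by rewrite -[x]prednK.
subst x; have /all_pred1P -> : all (pred1 0) s.
  by apply: sub_all (order_path_min geq_trans sorted_xs) => y /=; rewrite leqn0.
by rewrite filter_nseq count_nseq /= mul1n; case: (size s).
Qed.

Lemma sorted_geq_filter0_inj (s1 s2 : seq nat) : sorted geq s1 -> sorted geq s2 ->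
  size s1 = size s2 -> [seq k <- s1 | k != 0] = [seq k <- s2 | k != 0] -> s1 = s2.
Proof.
move=> sorted1 sorted2 eq_size eq_filter.
have count0 s : count_mem 0 s = size s - size [seq k <- s | k != 0].
  by rewrite size_filter -(count_predC (pred1 0) s) addnK.
rewrite (sorted_geq_filter0_nseq sorted1) (sorted_geq_filter0_nseq sorted2).
by rewrite !count0 eq_size eq_filter.
Qed.

Lemma sumn_filter0 (s : seq nat) : sumn [seq k <- s | k != 0] = sumn s.
Proof. by elim: s => //= x s IH; case: eqP => [->|_] /=; rewrite IH. Qed.

Section CycleType.
Variable t : nat.

Lemma sorted_partn_seq (p : partition_of t) : sorted geq (partn_seq p).
Proof. by case: p => x hx; rewrite /partn_seq /=; case/andP: hx. Qed.

Lemma size_partn_seq (p : partition_of t) : size (partn_seq p) = t.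
Proof. by rewrite size_map size_tuple. Qed.

Lemma sumn_partn_seq (p : partition_of t) : sumn (partn_seq p) = t.
Proof. by case: p => x hx; rewrite /partn_seq /=; case/andP: hx => _ /eqP. Qed.

Lemma cycle_type_is_uniq (s : 'S_t) (p q : partition_of t) :
  cycle_type_is s p -> cycle_type_is s q -> p = q.
Proof.
move=> /eqP type_p /eqP type_q.
apply: val_inj; apply: val_inj; apply: (inj_map val_inj); apply: sorted_geq_filter0_inj;
  by rewrite ?sorted_partn_seq ?size_partn_seq ?type_p ?type_q.
Qed.

Lemma cycle_type_exists (p : partition_of t) : exists s : 'S_t, cycle_type_is s p.
Proof.
set L := [seq k <- partn_seq p | k != 0].
have sumL : sumn L = t by rewrite sumn_filter0 sumn_partn_seq.
have L_gt0 : all (leq 1) L by apply/allP => k; rewrite mem_filter lt0n => /andP[].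
have sorted_L : sorted geq L.
  by apply: sorted_filter; [exact: geq_trans | exact: sorted_partn_seq].
exists (block_perm sumL); apply/eqP; rewrite /cycle_lengths.
transitivity (sort geq L); first by rewrite (sorted_sort geq_trans sorted_L).
apply/(perm_sortP geq_total geq_trans geq_anti).
by rewrite perm_sym perm_porbit_sizes_block_perm.
Qed.

End CycleType.

Section AdjacentCycles.
Variable T : finType.
Implicit Types (s g : {perm T}) (j : T).
Local Open Scope group_scope.

Lemma eq_permV g (x y : T) : (g^-1 x == y) = (x == g y).
Proof. by apply: canF_eq; exact: permKV. Qed.

(* Edges [{j, g j}] taken along the cycles of [s]: at a fixed point of [s] the
   edge is a loop, consecutive edges meet, and the two edges of a 2-cycle
   coincide.  This is what a nonzero trace of the product of the [sym_delta]s
   of these edges forces. *)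
Definition adjacent_cycles s g :=
  [/\ forall j, s j = j -> g j = j,
      forall j, s j != j -> (s j == g j) || (g (s j) == j)
    & forall j, s j != j -> s (s j) = j -> g j = s j /\ g (s j) = j].

Lemma adjacent_cyclesV s g : adjacent_cycles s g -> adjacent_cycles s g^-1.
Proof.
case=> fix_g next_g two_g.
split=> [j /fix_g gj|j /next_g|j /two_g two_gj /two_gj[gj gsj]].
- by apply/eqP; rewrite eq_permV gj.
- by move=> ?; rewrite [s j == _]eq_sym !eq_permV orbC [j == _]eq_sym.
- by split; apply/eqP; rewrite eq_permV ?gsj ?gj.
Qed.

Lemma adjacent_cyclesX s g j : adjacent_cycles s g -> s j = g j ->
  forall k, (s ^+ k) j = (g ^+ k) j.
Proof.
case=> fix_g next_g two_g.
have step y : s y = g y -> s (g y) = g (g y).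
  move=> sy; set z := g y.
  have [sz|nz] := eqVneq (s z) z; first by rewrite sz (fix_g z sz).
  case/orP: (next_g z nz) => [/eqP //|/eqP gsz].
  have szy : s z = y by apply: (@perm_inj _ g); rewrite gsz.
  have nyz : y != z by apply: contraNneq nz => yz; rewrite szy yz.
  have sny : s y != y by rewrite sy eq_sym.
  have ssy : s (s y) = y by rewrite sy -/z szy.
  have [_ gsy] := two_g y sny ssy.
  by rewrite szy -gsy sy.
move=> sj k; suff [] : s ((g ^+ k) j) = g ((g ^+ k) j) /\ (s ^+ k) j = (g ^+ k) j by [].
elim: k => [|k [IH1 IH2]]; first by rewrite !expg0 !perm1.
by rewrite !expgSr !permM IH2; split=> //; apply: step.
Qed.

Lemma adjacent_cycles_porbit s g :
  adjacent_cycles s g -> forall j, porbit s j = porbit g j.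
Proof.
move=> adj j.
have porbitE (h : {perm T}) :
    (forall k, (s ^+ k) j = (h ^+ k) j) -> porbit s j = porbit h j.
  by move=> e; apply/setP => y; apply/porbitP/porbitP => -[k ->]; exists k; rewrite e.
case: (adj) => fix_g next_g _; have [sj|nj] := eqVneq (s j) j.
  by apply/porbitE/adjacent_cyclesX; rewrite // sj fix_g.
case/orP: (next_g j nj) => [/eqP sj|gsj]; first exact/porbitE/adjacent_cyclesX.
rewrite -(porbitV g); apply/porbitE/adjacent_cyclesX; first exact: adjacent_cyclesV.
by apply/eqP; rewrite eq_sym eq_permV eq_sym.
Qed.

End AdjacentCycles.

Local Open Scope classical_set_scope.
Local Open Scope ring_scope.

Lemma mxtrace_idem (F : fieldType) d (X : 'M[F]_d) :
  X *m X = X -> \tr X = (\rank X)%:R.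
Proof.
move=> idemX; have X_base := esym (mulmx_base X).
move: (\rank X) (col_base X) (row_base X) (col_base_full X) (row_base_free X) X_base.
move=> r c w /row_fullP[B1 B1c] /row_freeP[B2 wB2] X_base.
have := congr1 (fun Y => B1 *m Y *m B2) idemX; rewrite /= X_base.
rewrite !mulmxA B1c !mul1mx -mulmxA wB2 mulmx1 => wc.
by rewrite mxtrace_mulC wc mxtrace1.
Qed.

Lemma mxrank1_factor (F : fieldType) d (X : 'M[F]_d) : \rank X = 1%N ->
  exists (c : 'cV[F]_d) (r : 'rV[F]_d), X = c *m r.
Proof.
move=> rk; have := mulmx_base X; move: (col_base X) (row_base X).
by rewrite rk => c r <-; exists c, r.
Qed.

Section SymDelta.
Variables (R : numDomainType) (d : nat).
Implicit Types (a b c e : 'I_d) (X : 'M[R]_d).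

Definition sym_delta a b : 'M[R]_d := delta_mx a b + delta_mx b a.

Lemma mxtrace_delta a b : \tr (delta_mx a b : 'M[R]_d) = (a == b)%:R.
Proof.
rewrite -[delta_mx a b](@mul_delta_mx _ _ 1 _ (0 : 'I_1)) mxtrace_mulC mul_delta_mx_cond.
by rewrite trace_mx11 mulmxnE mxE eqxx /= eq_sym; case: (a == b).
Qed.

Lemma mxtrace_mul_delta X a b : \tr (X *m delta_mx a b) = X b a.
Proof.
rewrite -[delta_mx a b](@mul_delta_mx _ _ 1 _ (0 : 'I_1)) mulmxA mxtrace_mulC mulmxA.
by rewrite -rowE -colE trace_mx11 !mxE.
Qed.

Lemma trmx_sym_delta a b : (sym_delta a b)^T = sym_delta a b.
Proof. by rewrite linearD /= !trmx_delta addrC. Qed.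

Lemma mxtrace_mul_sym_delta X a b : \tr (X *m sym_delta a b) = X b a + X a b.
Proof. by rewrite mulmxDr mxtraceD !mxtrace_mul_delta. Qed.

Lemma mul_sym_delta a b c e : sym_delta a b *m sym_delta c e =
  delta_mx a e *+ (b == c) + delta_mx a c *+ (b == e)
  + (delta_mx b e *+ (a == c) + delta_mx b c *+ (a == e)).
Proof. by rewrite mulmxDl !mulmxDr !mul_delta_mx_cond. Qed.

Lemma mul_sym_delta_neq0 a b c e : sym_delta a b *m sym_delta c e != 0 ->
  [|| b == c, b == e, a == c | a == e].
Proof.
apply: contraR; rewrite !negb_or mul_sym_delta.
by case/and4P=> /negbTE-> /negbTE-> /negbTE-> /negbTE->; rewrite !mulr0n !addr0.
Qed.

Lemma mxtrace_mul_sym_delta_neq0 a b c e : \tr (sym_delta a b *m sym_delta c e) != 0 ->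
  (b == c) && (a == e) || (b == e) && (a == c).
Proof.
rewrite mul_sym_delta !mxtraceD !raddfMn /= !mxtrace_delta.
by case: (b == c); case: (a == e); case: (b == e); case: (a == c);
  rewrite ?mulr0n ?addr0 ?eqxx.
Qed.

Lemma mxtrace_sym_delta_neq0 a b : \tr (sym_delta a b) != 0 -> a == b.
Proof.
rewrite mxtraceD !mxtrace_delta [b == a]eq_sym.
by case: (a == b) => //; rewrite addr0 eqxx.
Qed.

Definition nonneg_mx X := forall i j, 0 <= X i j.

Lemma nonneg_sym_delta a b : nonneg_mx (sym_delta a b).
Proof. by move=> i j; rewrite !mxE addr_ge0. Qed.

Lemma nonneg_mx1 : nonneg_mx 1%:M.
Proof. by move=> i j; rewrite mxE ler0n. Qed.

Lemma nonneg_mx_prod n (F : 'I_n -> 'M[R]_d) :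
  (forall k, nonneg_mx (F k)) -> nonneg_mx (\prod_(k < n) F k).
Proof.
move=> F_ge0; apply: (big_ind nonneg_mx) => //; first exact: nonneg_mx1.
move=> A B A_ge0 B_ge0 i j; rewrite -mulmxE mxE.
by apply: sumr_ge0 => k _; rewrite mulr_ge0.
Qed.

Lemma mxtrace_ge0 X : nonneg_mx X -> 0 <= \tr X.
Proof. by move=> X_ge0; apply: sumr_ge0. Qed.

Lemma prod_mx_path_ge1 n (F : nat -> 'M[R]_d) (v : nat -> 'I_d) :
  (forall k, nonneg_mx (F k)) -> (forall k, 1 <= F k (v k) (v k.+1)) ->
  1 <= (\prod_(k < n) F k) (v 0%N) (v n).
Proof.
move=> F_ge0 F_ge1; elim: n => [|n IH]; first by rewrite big_ord0 mxE eqxx.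
rewrite big_ord_recr /= -mulmxE mxE (bigD1 (v n)) //= -[1]addr0.
apply: lerD; first exact: mulr_ege1.
apply: sumr_ge0 => w _; apply: mulr_ge0; last exact: F_ge0.
by apply: nonneg_mx_prod => k; exact: F_ge0.
Qed.

End SymDelta.

Arguments sym_delta {R d}.

Import measurable_realfun.

Section Grassmannian.
Variables (R : realType) (d : nat).
Local Notation T := (MxSpace R d).

Lemma measurable_entry (i j : 'I_d) :
  measurable_fun setT (fun X : T => (X : 'M[R]_d) i j).
Proof. by move=> _ A mA; rewrite setTI; apply: sub_sigma_algebra; exists i, j, A. Qed.

Definition grass1_defect (X : 'M[R]_d) : R :=
  \sum_i \sum_j ((X i j - X j i) ^+ 2 + ((X *m X) i j - X i j) ^+ 2) + (\tr X - 1) ^+ 2.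

Lemma measurable_grass1_defect : measurable_fun setT (fun X : T => grass1_defect X).
Proof.
have mulmx_entry i j : measurable_fun setT (fun X : T => ((X : 'M[R]_d) *m X) i j).
  under eq_fun do rewrite mxE.
  by apply: measurable_sum => k; apply: measurable_funM; exact: measurable_entry.
apply: measurable_funD; last first.
  apply: measurable_funX; apply: measurable_funB => //.
  by apply: measurable_sum => i; exact: measurable_entry.
apply: measurable_sum => i; apply: measurable_sum => j.
apply: measurable_funD; apply: measurable_funX; apply: measurable_funB;
  by [exact: measurable_entry | exact: mulmx_entry].
Qed.

Lemma Grass1_defect_eq0 (X : 'M[R]_d) : @Grass1 R d X <-> grass1_defect X = 0.
Proof.
rewrite /grass1_defect; split=> [[symX [idemX rankX]]|].
  rewrite mxtrace_idem // rankX subrr expr0n /= addr0.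
  apply: big1 => i _; apply: big1 => j _.
  by rewrite -{2}symX mxE idemX !subrr expr0n /= addr0.
have sqr_sum_ge0 (x y : R) : 0 <= x ^+ 2 + y ^+ 2 by rewrite addr_ge0 ?sqr_ge0.
move/eqP; rewrite paddr_eq0 ?sqr_ge0 ?sumr_ge0 //; last first.
  by move=> i _; apply: sumr_ge0.
case/andP=> /eqP sum0; rewrite sqrf_eq0 subr_eq0 => /eqP trX.
have entry0 i j : (X i j - X j i) ^+ 2 + ((X *m X) i j - X i j) ^+ 2 = 0.
  move/eqP: sum0; rewrite psumr_eq0 => [/allP/(_ i (mem_index_enum _))|]; last first.
    by move=> k _; apply: sumr_ge0.
  rewrite implyTb psumr_eq0 // => /allP/(_ j (mem_index_enum _)).
  by rewrite implyTb => /eqP.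
have {}entry0 i j : X i j = X j i /\ (X *m X) i j = X i j.
  move/eqP: (entry0 i j); rewrite paddr_eq0 ?sqr_ge0 // !sqrf_eq0 !subr_eq0.
  by case/andP=> /eqP ? /eqP.
have idemX : X *m X = X by apply/matrixP => i j; case: (entry0 i j).
split; [|split] => //; first by apply/matrixP => i j; rewrite mxE; case: (entry0 j i).
by apply/eqP; rewrite -(pnatr_eq1 R) -mxtrace_idem // trX.
Qed.

Lemma measurable_Grass1 : measurable (@Grass1 R d : set T).
Proof.
have -> : (@Grass1 R d : set T) = (fun X : T => grass1_defect X) @^-1` [set 0].
  by apply/seteqP; split => X /Grass1_defect_eq0.
by rewrite -[_ @^-1` _]setTI; apply: measurable_grass1_defect.
Qed.

Lemma mu1_mx1 t (sigma : probability T R) : sigma (@Grass1 R d) = 1%E ->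
  mu1 sigma (fun _ : 'I_t => 1%:M) = 1%E.
Proof.
move=> sigma_Grass1; rewrite /mu1 (eq_integral (cst 1%E)); last first.
  move=> X; rewrite inE => -[_ [idemX rankX]] /=.
  by rewrite /hs_inner mulmx1 mxtrace_idem // rankX big1.
by rewrite integral_cst ?mul1e //; exact: measurable_Grass1.
Qed.

End Grassmannian.

Lemma mxtrace_prod_rot (R : comPzRingType) d n (F : nat -> 'M[R]_d) : F n = F 0%N ->
  \tr (\prod_(k < n) F k) = \tr (\prod_(k < n) F k.+1).
Proof.
case: n => [|n] Fn; first by rewrite !big_ord0.
by rewrite big_ord_recl big_ord_recr /= Fn -!mulmxE mxtrace_mulC.
Qed.

Section CycleTraces.
Variables (R : realType) (d t : nat).
Implicit Types (s : 'S_t) (j : 'I_t).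

Lemma card_porbit_fix s j : s j = j -> #|porbit s j| = 1%N.
Proof.
move=> sj; have := uniq_traject_porbit s j; have := card_porbit_neq0 s j.
by case: #|porbit s j| => [|[|n]] //= _; rewrite sj inE eqxx.
Qed.

Lemma card_porbit_gt1 s j : s j != j -> (1 < #|porbit s j|)%N.
Proof.
move=> sj; have := card_porbit_neq0 s j; have := iter_porbit s j.
by case: #|porbit s j| => [|[|n]] //= sjj; rewrite sjj eqxx in sj.
Qed.

Lemma card_porbit_involution s j : s j != j -> s (s j) = j -> #|porbit s j| = 2%N.
Proof.
move=> sj ssj; have := uniq_traject_porbit s j; have := card_porbit_gt1 sj.
by case: #|porbit s j| => [|[|[|n]]] //= _; rewrite ssj !inE eqxx orbT.
Qed.

(* [cycle_mx] starts the cycle at an arbitrarily picked point; its trace does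
   not depend on that choice. *)
Lemma mxtrace_cycle_mx (M : 'I_t -> 'M[R]_d) s j :
  \tr (cycle_mx M s (porbit s j)) = \tr (\prod_(k < #|porbit s j|) M ((s ^+ k)%g j)).
Proof.
rewrite /cycle_mx; case: pickP => [x xC|none]; last by have := none j; rewrite porbit_id.
have <- : porbit s x = porbit s j by apply/eqP; rewrite eq_porbit_mem.
move: xC; rewrite porbit_sym => /porbitP [m ->]; set n := #|porbit s x|.
elim: m => [|m IH]; first by rewrite expg0 perm1.
rewrite IH (@mxtrace_prod_rot _ _ n (fun k => M ((s ^+ k)%g ((s ^+ m)%g x)))).
  by congr (\tr _); apply: eq_bigr => k _ /=; rewrite expgS permM expgSr permM.
by rewrite /= expg0 perm1 /n -(porbit_perm s m x) permX iter_porbit.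
Qed.

Definition cycle_weight (M : 'I_t -> 'M[R]_d) s :=
  \prod_(C in porbits s) \tr (cycle_mx M s C).

Lemma nonneg_cycle_mx (M : 'I_t -> 'M[R]_d) s C :
  (forall i, nonneg_mx (M i)) -> nonneg_mx (cycle_mx M s C).
Proof.
move=> M_ge0; rewrite /cycle_mx; case: pickP => [x _|_]; last exact: nonneg_mx1.
by apply: nonneg_mx_prod => k; exact: M_ge0.
Qed.

Lemma cycle_weight_ge0 (M : 'I_t -> 'M[R]_d) s :
  (forall i, nonneg_mx (M i)) -> 0 <= cycle_weight M s.
Proof.
by move=> M_ge0; apply: prodr_ge0 => C _; apply/mxtrace_ge0/nonneg_cycle_mx.
Qed.

End CycleTraces.

Lemma eq_widen_ord n m (le_nm : (n <= m)%N) (a b : 'I_n) :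
  (widen_ord le_nm a == widen_ord le_nm b) = (a == b).
Proof. by []. Qed.

Section PermSymDelta.
Variables (R : realType) (t d : nat) (le_td : (t <= d)%N).
Implicit Types (g s : 'S_t) (p : partition_of t).

Definition perm_sym_delta g (j : 'I_t) : 'M[R]_d :=
  sym_delta (widen_ord le_td j) (widen_ord le_td (g j)).

Local Notation M := perm_sym_delta.

Lemma nonneg_perm_sym_delta g j : nonneg_mx (M g j).
Proof. exact: nonneg_sym_delta. Qed.

(* Every matrix [M g (g^k j)] has entry [1] at position [(g^k j, g^(k+1) j)], so
   the cycle of [g] through [j] is a closed walk of weight at least [1]. *)
Lemma cycle_weight_self_ge1 g : 1 <= cycle_weight (M g) g.
Proof.
apply: (big_ind (fun x : R => 1 <= x)) => //; first by move=> x y; apply: mulr_ege1.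
move=> _ /imsetP[j _ ->]; rewrite mxtrace_cycle_mx.
pose v k := widen_ord le_td ((g ^+ k)%g j).
have v_closed : v #|porbit g j| = v 0%N by rewrite /v expg0 perm1 permX iter_porbit.
have := @prod_mx_path_ge1 _ _ #|porbit g j| (fun k => M g ((g ^+ k)%g j)) v.
rewrite v_closed => walk_ge1; apply: le_trans (walk_ge1 _ _) _.
- by move=> k; exact: nonneg_perm_sym_delta.
- move=> k; rewrite /M /v expgSr permM !mxE !eqxx /=.
  by rewrite ler_wpDr ?ler0n.
rewrite /mxtrace (bigD1 (v 0%N)) //= ler_wpDr //.
by apply: sumr_ge0 => i _; apply: nonneg_mx_prod => k; exact: nonneg_perm_sym_delta.
Qed.

Lemma cycle_weight_neq0_porbits g s : cycle_weight (M g) s != 0 -> porbits s = porbits g.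
Proof.
move=> /prodf_neq0 weight_neq0; apply: eq_imset; apply: adjacent_cycles_porbit.
have tr_neq0 j : \tr (\prod_(k < #|porbit s j|) M g ((s ^+ k)%g j)) != 0.
  by rewrite -mxtrace_cycle_mx; apply: weight_neq0; exact: imset_f.
split=> [j sj|j sj|j sj ssj].
- move: (tr_neq0 j); rewrite card_porbit_fix // big_ord1 expg0 perm1.
  by move/mxtrace_sym_delta_neq0; rewrite eq_widen_ord => /eqP <-.
- move: (tr_neq0 j) (card_porbit_gt1 sj).
  case: #|porbit s j| => [|[|n]] // tr_prod_neq0 _.
  have : M g j *m M g (s j) != 0.
    apply: contraNneq tr_prod_neq0 => M_prod0.
    by rewrite !big_ord_recl mulrA expg0 perm1 expg1 -mulmxE M_prod0 mul0mx mxtrace0.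
  move/mul_sym_delta_neq0; rewrite !eq_widen_ord (inj_eq perm_inj) [j == s j]eq_sym.
  by rewrite (negbTE sj) /= => /orP[/eqP-> | /eqP<-]; rewrite eqxx ?orbT.
- move: (tr_neq0 j); rewrite card_porbit_involution // big_ord_recl big_ord1 /=.
  rewrite expg0 perm1 expg1 -mulmxE => /mxtrace_mul_sym_delta_neq0.
  rewrite !eq_widen_ord [j == s j]eq_sym (negbTE sj) andbF orbF.
  by case/andP=> /eqP -> /eqP <-.
Qed.

Definition cycle_expansion (alpha : partition_of t -> R) (N : 'I_t -> 'M[R]_d) :=
  \sum_p alpha p * \sum_(s | cycle_type_is s p) cycle_weight N s.

Lemma cycle_expansion_perm_sym_delta alpha g p : cycle_type_is g p ->
  cycle_expansion alpha (M g) = alpha p * \sum_s cycle_weight (M g) s.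
Proof.
move=> type_g.
have sum_type q : \sum_(s | cycle_type_is s q) cycle_weight (M g) s =
    (cycle_type_is g q)%:R * \sum_s cycle_weight (M g) s.
  rewrite big_mkcond mulr_sumr; apply: eq_bigr => s _.
  have [->|/cycle_weight_neq0_porbits porbits_s] := eqVneq (cycle_weight (M g) s) 0.
    by rewrite mulr0; case: ifP.
  by rewrite /cycle_type_is /cycle_lengths porbits_s; case: ifP; rewrite ?mul1r ?mul0r.
rewrite /cycle_expansion (bigD1 p) //= sum_type type_g mul1r.
rewrite [X in _ + X]big1 ?addr0 // => q neq_qp; rewrite sum_type.
case: (boolP (cycle_type_is g q)) => [type_q|_]; last by rewrite mul0r mulr0.
by rewrite (cycle_type_is_uniq type_q type_g) eqxx in neq_qp.
Qed.

Lemma sum_cycle_weight_gt0 g : 0 < \sum_s cycle_weight (M g) s.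
Proof.
rewrite (bigD1 g) //=; apply: lt_le_trans (lt_le_trans ltr01 (cycle_weight_self_ge1 g)) _.
rewrite lerDl; apply: sumr_ge0 => s _.
by apply: cycle_weight_ge0; exact: nonneg_perm_sym_delta.
Qed.

Lemma prod_hs_inner_perm_sym_delta (X : 'M[R]_d) g : @Grass1 R d X ->
  \prod_(i < t) hs_inner X (M g i) = \prod_(i < t) hs_inner X (M 1%g i).
Proof.
case=> [symX [_ rankX]]; move: symX; have [c [r ->]] := mxrank1_factor rankX => symX.
have hs_inner_sym_delta (a b : 'I_d) :
    hs_inner (c *m r) (sym_delta a b) = (2 * c a 0) * r 0 b.
  rewrite /hs_inner mxtrace_mul_sym_delta -{1}symX mxE !mxE big_ord1.
  by rewrite -mulrA mulr_natl mulr2n.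
have prodE h : \prod_(i < t) hs_inner (c *m r) (M h i) =
    \prod_(i < t) (2 * c (widen_ord le_td i) 0) * \prod_(i < t) r 0 (widen_ord le_td i).
  rewrite /M; under eq_bigr => i _ do rewrite hs_inner_sym_delta.
  by rewrite big_split /=; congr (_ * _); rewrite [RHS](reindex_inj (@perm_inj _ h)).
by rewrite !prodE.
Qed.

Lemma mu1_perm_sym_delta (sigma : probability (MxSpace R d) R) g :
  mu1 sigma (M g) = mu1 sigma (M 1%g).
Proof.
by apply: eq_integral => X; rewrite inE => /(prod_hs_inner_perm_sym_delta g) ->.
Qed.

End PermSymDelta.

Theorem proposition3p3 (R : realType) (t d : nat)
    (sigma : probability (MxSpace R d) R) :
  (t <= d)%N ->
  sigma (@Grass1 R d) = 1%E ->
  orth_invariant sigma ->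
  forall alpha : partition_of t -> R,
  (forall M : 'I_t -> 'M[R]_d, (forall i, symmetric_mx (M i)) ->
     mu1 sigma M =
     (\sum_(p : partition_of t) alpha p *
        \sum_(s : 'S_t | cycle_type_is s p)
           \prod_(C in porbits s) \tr (cycle_mx M s C))%:E) ->
  forall p : partition_of t, 0 < alpha p.
Proof.
move=> le_td sigma_Grass1 _ alpha expansion.
pose M := perm_sym_delta R le_td; pose J := cycle_expansion alpha (M 1%g).
have alphaK q : exists2 K, 0 < K & alpha q * K = J.
  have [g type_g] := cycle_type_exists q.
  exists (\sum_s cycle_weight (M g) s); first exact: sum_cycle_weight_gt0.
  rewrite -(cycle_expansion_perm_sym_delta le_td alpha type_g); apply/EFin_inj.
  by rewrite -!expansion ?mu1_perm_sym_delta // => i; exact: trmx_sym_delta.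
have J_gt0 : 0 < J.
  rewrite ltNge; apply/negP => J_le0.
  suff : cycle_expansion alpha (fun _ => 1%:M : 'M[R]_d) <= 0.
    have := expansion _ (fun _ => trmx1 _ _); rewrite mu1_mx1 // => -[one_expansion].
    by rewrite /cycle_expansion /cycle_weight -one_expansion ler10.
  apply: sumr_le0 => q _; apply: mulr_le0_ge0.
    by have [K K_gt0 alphaK_q] := alphaK q; rewrite -(pmulr_lle0 _ K_gt0) alphaK_q.
  by apply: sumr_ge0 => s _; apply: cycle_weight_ge0 => _; exact: nonneg_mx1.
move=> p; have [K K_gt0 alphaK_p] := alphaK p.
by rewrite -(pmulr_lgt0 _ K_gt0) alphaK_p.
Qed.
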